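(* Let $n\ge1$. For every $0\le i<n$, $|\mathrm{I}A^2_{n,i}|=|\mathrm{I}B^2_{n,i}|$.
   Context: Fix $n\ge1$. $\mathrm{SBC}(n,0)=0$, $\mathrm{SBC}(n,i)=\sum_{j=0}^{i-1}\binom{n}{j}$ for $1\le i\le n+1$. For $0\le k<2^n$, $\mathrm{IStep}(n,k)$ is the unique $i\in\{0,\ldots,n\}$ with $\mathrm{SBC}(n,i)\le k<\mathrm{SBC}(n,i+1)$; $\mathrm{Weight}(k)$ is the number of 1's in the binary representation of $k$. For $0\le i\le n$: $\mathrm{I}A_{n,i}=\{k<2^n:\mathrm{IStep}(n,k)=i\}$, $\mathrm{I}B_{n,i}=\{k<2^n:\mathrm{Weight}(k)=i\}$, $\mathrm{I}A^1_{n,i}=\mathrm{I}A_{n,i}\setminus\mathrm{I}B_{n,i}$, $\mathrm{I}B^1_{n,i}=\mathrm{I}B_{n,i}\setminus\mathrm{I}A_{n,i}$. For $0\le i,j\le n$ with $i\ne j$: $\mathrm{I}C^1_{n,i,j}=\mathrm{I}A^1_{n,i}\cap\mathrm{I}B^1_{n,j}$, $\gamma^1_{n,i,j}=|\mathrm{I}C^1_{n,i,j}|$, and $\mathrm{I}\overline{C}^1_{n,i,j}$ is: all of $\mathrm{I}C^1_{n,i,j}$ if $\gamma^1_{n,i,j}\le\gamma^1_{n,j,i}$; the $\gamma^1_{n,j,i}$ smallest elements of $\mathrm{I}C^1_{n,i,j}$ if $\gamma^1_{n,i,j}>\gamma^1_{n,j,i}$ and $i>j$; the $\gamma^1_{n,j,i}$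 largest elements of $\mathrm{I}C^1_{n,i,j}$ if $\gamma^1_{n,i,j}>\gamma^1_{n,j,i}$ and $i<j$. Finally $\mathrm{I}A^2_{n,i}=\mathrm{I}A^1_{n,i}\setminus\bigcup_{j\ne i}\mathrm{I}\overline{C}^1_{n,i,j}$ and $\mathrm{I}B^2_{n,i}=\mathrm{I}B^1_{n,i}\setminus\bigcup_{j\ne i}\mathrm{I}\overline{C}^1_{n,j,i}$, where $j$ ranges over $\{0,\ldots,n\}\setminus\{i\}$. *)

(* Subsets of {0,...,2^n-1} are represented as
   increasing duplicate-free sequences of nat (filters of iota 0 (2^n)),
   so cardinality = size and "the m smallest/largest elements" = take/drop. *)
From mathcomp Require Import all_boot.
Set Implicit Arguments. Unset Strict Implicit. Unset Printing Implicit Defensive.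

Definition SBC (n i : nat) : nat := \sum_(j < i) 'C(n, j).

Definition IStep (n k : nat) : nat :=
  find (fun i => (SBC n i <= k) && (k < SBC n i.+1)) (iota 0 n.+1).

(* number of 1's in the binary representation of k: bit j of k is odd (k / 2^j);
   all bits of index >= k are 0 since 2^j > k. *)
Definition Weight (k : nat) : nat := \sum_(j < k) odd (k %/ 2 ^ j).

Definition univ (n : nat) : seq nat := iota 0 (2 ^ n).

Definition IA (n i : nat) : seq nat := [seq k <- univ n | IStep n k == i].
Definition IB (n i : nat) : seq nat := [seq k <- univ n | Weight k == i].
Definition IA1 (n i : nat) : seq nat := [seq k <- IA n i | k \notin IB n i].
Definition IB1 (n i : nat) : seq nat := [seq k <- IB n i | k \notin IA n i].
Definition IC1 (n i j : nat) : seq nat := [seq k <- IA1 n i | k \in IB1 n j].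
Definition gamma1 (n i j : nat) : nat := size (IC1 n i j).

(* IC1 n i j is sorted increasingly, so take = smallest, drop = largest *)
Definition ICbar1 (n i j : nat) : seq nat :=
  if gamma1 n i j <= gamma1 n j i then IC1 n i j
  else if j < i then take (gamma1 n j i) (IC1 n i j)
  else drop (gamma1 n i j - gamma1 n j i) (IC1 n i j).

Definition IA2 (n i : nat) : seq nat :=
  [seq k <- IA1 n i |
     ~~ has (fun j => (j != i) && (k \in ICbar1 n i j)) (iota 0 n.+1)].
Definition IB2 (n i : nat) : seq nat :=
  [seq k <- IB1 n i |
     ~~ has (fun j => (j != i) && (k \in ICbar1 n j i)) (iota 0 n.+1)].

(** Both [IA n i] and [IB n i] have [C(n,i)] elements, and [IA1 n i], [IB1 n i]
    are obtained from them by removing the same common part, so they are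
    equinumerous.  [IA2 n i] then removes from [IA1 n i] the pairwise disjoint
    blocks [ICbar1 n i j] (disjoint because their elements have weight [j]),
    and [IB2 n i] removes from [IB1 n i] the disjoint blocks [ICbar1 n j i];
    both blocks have [min (gamma1 n i j) (gamma1 n j i)] elements. *)
From mathcomp Require Import all_boot zify.

Lemma count_sum (T : Type) (p : pred T) (s : seq T) :
  count p s = \sum_(x <- s) p x.
Proof. by elim: s => [|x s IH]; rewrite ?big_nil ?big_cons //= IH. Qed.

Lemma count_iota_interval a b N :
  count (fun k => a <= k < b) (iota 0 N) = minn b N - minn a N.
Proof.
elim: N => [|N IH]; first by rewrite !minn0.
rewrite -addn1 iotaD count_cat IH /= add0n addn0.
by case: (leqP a N); case: (ltnP N b) => ? ?; lia.
Qed.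

Lemma count_iota_double (p : pred nat) M :
  count p (iota 0 M.*2) = \sum_(0 <= m < M) (p m.*2 + p m.*2.+1).
Proof.
elim: M => [|M IH]; first by rewrite big_geq.
rewrite big_nat_recr // -IH doubleS -[_.+2]addn2 iotaD count_cat /=.
by rewrite add0n addn0 addnA.
Qed.

Section IntervalIndex.

Variable f : nat -> nat.
Hypothesis f_homo : {homo f : a b / a <= b}.

Lemma interval_index_unique k i j :
  f i <= k < f i.+1 -> f j <= k < f j.+1 -> i = j.
Proof.
move=> /andP[lo_i hi_i] /andP[lo_j hi_j].
case: (ltngtP i j) => // [ij|ji].
- by have := f_homo _ _ ij; lia.
- by have := f_homo _ _ ji; lia.
Qed.

Lemma find_interval_iota k N i : i < N ->
  (find (fun j => f j <= k < f j.+1) (iota 0 N) == i) = (f i <= k < f i.+1).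
Proof.
move=> iN; set P := fun j => _; change ((find P (iota 0 N) == i) = P i).
have find_sat : find P (iota 0 N) < N -> P (find P (iota 0 N)).
  move=> fN; have hasP : has P (iota 0 N) by rewrite has_find size_iota.
  by move: (nth_find 0 hasP); rewrite nth_iota // add0n.
case Pi: (P i); apply/eqP.
- have fN : find P (iota 0 N) < N.
    rewrite -[N in _ < N](size_iota 0) -has_find.
    by apply/hasP; exists i; rewrite ?mem_iota.
  exact: (@interval_index_unique k _ _ (find_sat fN) Pi).
- by move=> fi; move: Pi; rewrite -fi find_sat // fi.
Qed.

End IntervalIndex.

Lemma SBCS n i : SBC n i.+1 = SBC n i + 'C(n, i).
Proof. by rewrite /SBC big_ord_recr. Qed.

Lemma leq_SBC n : {homo SBC n : i j / i <= j}.
Proof. by move=> i j ij; rewrite /SBC -(subnKC ij) big_split_ord leq_addr. Qed.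

Lemma SBC_full n : SBC n n.+1 = 2 ^ n.
Proof.
rewrite /SBC -[2]/(1 + 1) expnDn; apply: eq_bigr => i _.
by rewrite !exp1n !muln1.
Qed.

Lemma IStepE n k i : i <= n -> (IStep n k == i) = (SBC n i <= k < SBC n i.+1).
Proof. by move=> ni; rewrite /IStep find_interval_iota //; apply: leq_SBC. Qed.

Lemma size_IA n i : i <= n -> size (IA n i) = 'C(n, i).
Proof.
move=> ni; rewrite /IA size_filter /univ.
rewrite (eq_count (a2 := fun k => SBC n i <= k < SBC n i.+1)); last first.
  by move=> k; rewrite IStepE.
have := leq_SBC n _ _ (leqnSn i); have : SBC n i.+1 <= 2 ^ n.
  by rewrite -SBC_full; apply: leq_SBC.
by rewrite count_iota_interval SBCS; lia.
Qed.

Lemma Weight_wide N k : k <= N -> Weight k = \sum_(j < N) odd (k %/ 2 ^ j).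
Proof.
move=> kN; rewrite /Weight (big_ord_widen N (fun j => (odd (k %/ 2 ^ j) : nat)) kN).
rewrite big_mkcond; apply: eq_bigr => j _; case: ifP => // kj.
rewrite divn_small //; apply: leq_trans (ltn_expl j (isT : 1 < 2)).
by rewrite ltnS leqNgt kj.
Qed.

Lemma Weight_double_add m (b : bool) : Weight (m.*2 + b) = Weight m + b.
Proof.
rewrite (@Weight_wide (m.*2 + b).+1) // big_ord_recl /= expn0 divn1.
rewrite (@Weight_wide (m.*2 + b) m); last by lia.
rewrite addnC; congr (_ + _); last by rewrite oddD odd_double; case: b.
apply: eq_bigr => j _; rewrite /bump /= add1n expnS divnMA.
congr (odd (_ %/ _)); rewrite -muln2 divnMDl // divn_small ?addn0 //.
by case: (b : bool).
Qed.

Lemma count_Weight n i : count (fun k => Weight k == i) (iota 0 (2 ^ n)) = 'C(n, i).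
Proof.
elim: n i => [|n IH] i.
  by rewrite expn0 /= addn0 bin0n /Weight big_ord0 eq_sym.
rewrite expnS mul2n count_iota_double.
have W_even m : Weight m.*2 = Weight m.
  by rewrite -[m.*2]addn0 (Weight_double_add m false) addn0.
have W_odd m : Weight m.*2.+1 = (Weight m).+1.
  by rewrite -addn1 (Weight_double_add m true) addn1.
under eq_bigr => m _ do rewrite W_even W_odd.
have sum_count (p : pred nat) N : \sum_(0 <= m < N) p m = count p (iota 0 N).
  by rewrite count_sum /index_iota subn0.
rewrite big_split /= (sum_count (fun m => Weight m == i)) IH.
case: i => [|i]; first by rewrite big1 ?addn0 ?bin0.
under eq_bigr => m _ do rewrite eqSS.
by rewrite (sum_count (fun m => Weight m == i)) IH binS.
Qed.

Lemma size_IB n i : size (IB n i) = 'C(n, i).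
Proof. by rewrite /IB size_filter count_Weight. Qed.

Lemma size_filter_notin_sym (T : eqType) (u : seq T) (p q : pred T) :
  size (filter p u) = size (filter q u) ->
  size [seq k <- filter p u | k \notin filter q u] =
  size [seq k <- filter q u | k \notin filter p u].
Proof.
have inter (a b : pred T) :
    count (mem (filter b u)) (filter a u) = count (predI a b) u.
  rewrite count_filter; apply: eq_in_count => k uk /=.
  by rewrite mem_filter uk andbT andbC.
have diff (a b : pred T) : count (predC (mem (filter b u))) (filter a u) =
    count a u - count (predI a b) u.
  have := count_predC (mem (filter b u)) (filter a u).
  by rewrite size_filter inter; lia.
rewrite !size_filter => e; rewrite [LHS]diff [RHS]diff e.
by congr (_ - _); apply: eq_count => k; apply: andbC.
Qed.

Lemma size_IA1 n i : i <= n -> size (IA1 n i) = size (IB1 n i).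
Proof. by move=> ni; apply: size_filter_notin_sym; rewrite size_IB size_IA. Qed.

Lemma count_mem_subset (T : eqType) (s t : seq T) :
  uniq s -> uniq t -> {subset s <= t} -> count (mem s) t = size s.
Proof.
move=> us ut st; rewrite -size_filter; apply/perm_size/uniq_perm => //.
  exact: filter_uniq.
by move=> x; rewrite mem_filter /=; case sx: (x \in s) => //=; apply: st.
Qed.

Lemma has_count_le1 (I : eqType) (q : pred I) (J : seq I) w :
  uniq J -> (forall j, q j -> j = w) -> (has q J : nat) = count q J.
Proof.
move=> uJ qw; have : count q J <= 1.
  apply: leq_trans (_ : count (pred1 w) J <= 1).
    by apply: sub_count => j /qw ->; rewrite /= eqxx.
  by rewrite count_uniq_mem //; case: (_ \in _).
by rewrite has_count; case: (count q J) => [|[|]].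
Qed.

(* The blocks [C j] are disjoint since every element of [C j] is labelled [j] by [w]. *)
Lemma size_filter_not_in_blocks (T I : eqType) (s : seq T) (J : seq I)
    (C : I -> seq T) (w : T -> I) (P : pred I) :
  uniq s -> uniq J -> (forall j, uniq (C j)) -> (forall j, {subset C j <= s}) ->
  (forall j k, k \in C j -> w k = j) ->
  size [seq k <- s | ~~ has (fun j => P j && (k \in C j)) J] =
  size s - \sum_(j <- J | P j) size (C j).
Proof.
move=> us uJ uC sC wC; pose inC k := has (fun j => P j && (k \in C j)) J.
rewrite size_filter -[in size s](count_predC inC s).
suff -> : count inC s = \sum_(j <- J | P j) size (C j) by rewrite addKn.
rewrite count_sum.
transitivity (\sum_(k <- s) \sum_(j <- J | P j) (k \in C j : nat)).
  apply: eq_bigr => k _; rewrite (@has_count_le1 _ _ _ (w k)) //; last first.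
    by move=> j /andP[_ /wC].
  by rewrite count_sum [RHS]big_mkcond; apply: eq_bigr => j _; case: (P j).
rewrite exchange_big; apply: eq_bigr => j _.
by rewrite -count_sum count_mem_subset.
Qed.

Lemma uniq_IA1 n i : uniq (IA1 n i).
Proof. by do 2 apply: filter_uniq; apply: iota_uniq. Qed.

Lemma uniq_IB1 n i : uniq (IB1 n i).
Proof. by do 2 apply: filter_uniq; apply: iota_uniq. Qed.

Lemma uniq_ICbar1 n i j : uniq (ICbar1 n i j).
Proof.
have uC : uniq (IC1 n i j) by apply/filter_uniq/uniq_IA1.
rewrite /ICbar1; case: ifP => // _.
by case: ifP => _; [apply: take_uniq | apply: drop_uniq].
Qed.

Lemma mem_ICbar1 n i j k : k \in ICbar1 n i j ->
  [/\ k \in IA1 n i, k \in IB1 n j, IStep n k = i & Weight k = j].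
Proof.
have sub : {subset ICbar1 n i j <= IC1 n i j}.
  move=> x; rewrite /ICbar1; case: ifP => // _.
  by case: ifP => _; [apply: mem_take | apply: mem_drop].
move=> /sub; rewrite mem_filter => /andP[kB kA]; split => //.
- by move: kA; rewrite !mem_filter => /and3P[_ /eqP].
- by move: kB; rewrite !mem_filter => /and3P[_ /eqP].
Qed.

Lemma size_ICbar1 n i j : size (ICbar1 n i j) = minn (gamma1 n i j) (gamma1 n j i).
Proof.
rewrite /ICbar1; case: ifP => [ij|/negbT]; first by rewrite (minn_idPl ij).
rewrite -ltnNge => ji; rewrite (minn_idPr (ltnW ji)).
by case: ifP => _; rewrite ?size_take ?size_drop -/(gamma1 n i j) ?ji //; lia.
Qed.

Lemma size_IA2 n i : size (IA2 n i) =
  size (IA1 n i) - \sum_(j <- iota 0 n.+1 | j != i) minn (gamma1 n i j) (gamma1 n j i).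
Proof.
rewrite /IA2 (@size_filter_not_in_blocks _ _ _ _ _ Weight) ?iota_uniq ?uniq_IA1 //.
- by under eq_bigr => j _ do rewrite size_ICbar1.
- by move=> j; apply: uniq_ICbar1.
- by move=> j k /mem_ICbar1[].
- by move=> j k /mem_ICbar1[].
Qed.

Lemma size_IB2 n i : size (IB2 n i) =
  size (IB1 n i) - \sum_(j <- iota 0 n.+1 | j != i) minn (gamma1 n j i) (gamma1 n i j).
Proof.
rewrite /IB2 (@size_filter_not_in_blocks _ _ _ _ _ (IStep n)) ?iota_uniq ?uniq_IB1 //.
- by under eq_bigr => j _ do rewrite size_ICbar1.
- by move=> j; apply: uniq_ICbar1.
- by move=> j k /mem_ICbar1[].
- by move=> j k /mem_ICbar1[].
Qed.

Theorem proposition5 (n : nat) : 1 <= n ->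
  forall i : nat, i < n -> size (IA2 n i) = size (IB2 n i).
Proof.
move=> _ i /ltnW ni.
rewrite size_IA2 size_IB2 size_IA1 //; congr (_ - _).
by apply: eq_bigr => j _; rewrite minnC.
Qed.
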